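(* In $\mathbb{Z}[q,q^{-1}][[x,y]]$, \[ A(q,x,y)=\sum_{i=1}^{\infty}q^i[i]!\,x^iy^i\prod_{j=0}^{i}\frac{1}{q^j-q^j[j+1]x+[j]xy}. \]
   Context: $[m]=1+q+\dots+q^{m-1}$ ($[0]=0$), $[i]!=\prod_{m=1}^i[m]$. For $0\le k\le n$, a $\hbox{Le}$-diagram in a $k\times(n-k)$ rectangle is a pair $(\lambda,D)$ with $\lambda=(\lambda_1\ge\dots\ge\lambda_k\ge0)$, $\lambda_1\le n-k$, and $D$ a filling of the Young diagram of $\lambda$ (row $i$ has $\lambda_i$ left-justified boxes, row 1 on top) by $0$'s and $1$'s such that no $0$ has a $1$ above it in its column and a $1$ to its left in its row; its rank is its number of $1$'s. $A_{k,n}(q)=\sum q^{\mathrm{rank}}$ over such diagrams (the generating function of cells of the totally nonnegative Grassmannian $Gr^+_{k,n}$ by dimension), $A_{k,n}(q)=0$ for $n<k$, and $A(q,x,y)=\sum_{k\ge1}\sum_{n\ge0}A_{k,n}(q)x^ny^k$. Each factor $1/(q^j-q^j[j+1]x+[j]xy)$ is its inverse in $\mathbb{Z}[q,q^{-1}][[x,y]]$ (equivalently the expansion of $\frac{1}{q^j(1-[j+1]x)\left(1-\frac{q^{-j}[j]y}{1-[j+1]x}\right)}$). *)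

From mathcomp Require Import all_boot all_order all_algebra.
Set Implicit Arguments. Unset Strict Implicit. Unset Printing Implicit Defensive.
Import GRing.Theory.
Local Open Scope ring_scope.

Section Defs.
Variable R : comUnitRingType.

Definition qint (q : R) (m : nat) : R := \sum_(i < m) q ^+ i.
Definition qfact (q : R) (i : nat) : R := \prod_(1 <= m < i.+1) qint q m.

(* A Le-diagram in a k x m rectangle (m = n - k): a shape lambda given by the
   row lengths lam i (row 0 = top row), and a 0/1 filling D of the boxes
   (D (i,j) = true means the box (i,j) contains a 1). Boxes outside lambda
   carry no entry; we force D to be false there. *)
Definition LeType (k m : nat) :=
  ({ffun 'I_k -> 'I_m.+1} * {ffun 'I_k * 'I_m -> bool})%type.

Definition isLe (k m : nat) (p : LeType k m) : bool :=
  let lam := p.1 in let D := p.2 in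
  [&& [forall i : 'I_k, forall i' : 'I_k, (i <= i')%N ==> (lam i' <= lam i)%N],
      [forall c : 'I_k * 'I_m, D c ==> (c.2 < lam c.1)%N] &
      [forall c : 'I_k * 'I_m,
         ((c.2 < lam c.1)%N && ~~ D c) ==>
         ~~ ([exists i' : 'I_k, (i' < c.1)%N && D (i', c.2)] &&
             [exists j' : 'I_m, (j' < c.2)%N && D (c.1, j')])]].

Definition LeRank (k m : nat) (p : LeType k m) : nat :=
  #|[pred c : 'I_k * 'I_m | p.2 c]|.

Definition Akn (q : R) (k n : nat) : R :=
  if (k <= n)%N then \sum_(p : LeType k (n - k) | isLe p) q ^+ LeRank p
  else 0.

(* Formal power series in x, y over R: s n k = coefficient of x^n y^k. *)
Definition ser := nat -> nat -> R.

Definition serone : ser := fun n k => if (n == 0)%N && (k == 0)%N then 1 else 0.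

Definition sermul (s t : ser) : ser := fun n k =>
  \sum_(a < n.+1) \sum_(b < k.+1) s a b * t (n - a)%N (k - b)%N.

Definition serscale (c : R) (s : ser) : ser := fun n k => c * s n k.

Definition serxy (i : nat) (s : ser) : ser := fun n k =>
  if (i <= n)%N && (i <= k)%N then s (n - i)%N (k - i)%N else 0.

Fixpoint serprod (g : nat -> ser) (i : nat) : ser :=
  match i with
  | 0 => g 0%N
  | i'.+1 => sermul (serprod g i') (g i)
  end.

Definition factor (q : R) (j : nat) : ser := fun n k =>
  if (n == 0)%N && (k == 0)%N then q ^+ j
  else if (n == 1)%N && (k == 0)%N then - (q ^+ j * qint q j.+1)
  else if (n == 1)%N && (k == 1)%N then qint q j
  else 0.

Definition Aser (q : R) : ser := fun n k => if (1 <= k)%N then Akn q k n else 0.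

Definition rhsterm (q : R) (g : nat -> ser) (i : nat) : ser :=
  serxy i (serscale (q ^+ i * qfact q i) (serprod g i)).

(* the infinite sum over i >= 1: the coefficient of x^n y^k only receives
   contributions from i <= n (summands with i > n vanish there identically) *)
Definition rhs (q : R) (g : nat -> ser) : ser := fun n k =>
  \sum_(1 <= i < n.+1) rhsterm q g i n k.

End Defs.

(* Let f_j = q^j - q^j [j+1] x + [j] x y, with inverse g_j, and
     psi_m = sum_i q^(m+i) [m+1] ... [m+i] x^i y^i g_m g_(m+1) ... g_(m+i),
   so that the right-hand side is psi_0 - g_0 and f_m psi_m = q^m + [m+1] x y psi_(m+1).
   Read coefficientwise, the latter identity is a recursion which, q being a unit,
   determines every coefficient of every psi_m by induction on the x-degree.

   Weight a Le-diagram whose rows have length at most N by q^rank [m+1]^u, where u counts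
   the columns j < N in which no row has a 0 with a 1 to its left, and let S_m(k, N) be the
   total weight of such diagrams with k rows.  A new top row may put 1s only into these u
   columns; summing over its fillings in closed form shows that (m, n, k) |-> S_m(k, n - k)
   obeys the same recursion.  Since [1] = 1, S_0(k, n - k) = A_{k,n} for k >= 1, and
   S_0(0, n) = 1 = [x^n y^0] g_0. *)

From mathcomp Require Import all_boot all_order all_algebra.
From mathcomp Require Import ring zify.
From Stdlib Require Import FunctionalExtensionality.
Set Implicit Arguments. Unset Strict Implicit. Unset Printing Implicit Defensive.
Import GRing.Theory.
Local Open Scope ring_scope.

Section QInt.
Variables (R : comUnitRingType) (q : R).

Lemma qint0 : qint q 0 = 0.
Proof. by rewrite /qint big_ord0. Qed.

Lemma qintS m : qint q m.+1 = qint q m + q ^+ m.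
Proof. by rewrite /qint big_ord_recr. Qed.

Lemma qint1 : qint q 1 = 1.
Proof. by rewrite qintS qint0 add0r expr0. Qed.

Lemma qintSl m : qint q m.+1 = 1 + q * qint q m.
Proof.
rewrite /qint big_ord_recl expr0 mulr_sumr; congr (_ + _).
by apply: eq_bigr => i _; rewrite lift0 exprS.
Qed.

End QInt.

(** * Formal power series in x and y *)

Lemma sum_nat_shift (V : nmodType) (F : nat -> V) a n :
  \sum_(0 <= c < n.+1) (if (a <= c)%N then F c else 0) =
  if (a <= n)%N then \sum_(0 <= c < (n - a).+1) F (c + a)%N else 0.
Proof.
case: leqP => an; last first.
  by rewrite big1_seq // => c /andP[_]; rewrite mem_index_iota => ?; rewrite ifF //; lia.
rewrite (@big_cat_nat _ _ _ a) //=; last by lia.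
rewrite big1_seq ?add0r; last first.
  by move=> c /andP[_]; rewrite mem_index_iota => ?; rewrite ifF //; lia.
rewrite -{1}(add0n a) big_addn -subSn //; apply: eq_big_nat => c _.
by rewrite leq_addl.
Qed.

Section SeriesShift.
Variable R : comUnitRingType.
Implicit Types (s t : ser R) (a b c d n k : nat).

Definition sershift a b s : ser R := fun n k =>
  if (a <= n)%N && (b <= k)%N then s (n - a)%N (k - b)%N else 0.

Lemma serxyE i s : serxy i s = sershift i i s.
Proof. by []. Qed.

Lemma sershiftx s n k :
  sershift 1 0 s n k = if n is n'.+1 then s n' k else 0.
Proof. by rewrite /sershift subn0; case: n => [|n] //; rewrite subn1. Qed.

Lemma sershiftxy s n k :
  sershift 1 1 s n k = if n is n'.+1 then (if k is k'.+1 then s n' k' else 0) else 0.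
Proof. by rewrite /sershift; case: n => [|n] //; case: k => [|k] //; rewrite !subn1. Qed.

Lemma sershift_sershift a b c d s :
  sershift a b (sershift c d s) = sershift (a + c) (b + d) s.
Proof.
apply: functional_extensionality => n; apply: functional_extensionality => k.
rewrite /sershift; case: (boolP ((a <= n) && (b <= k))%N) => [/andP[an bk]|nab].
  by rewrite !leq_subRL // !subnDA.
by rewrite ifF //; apply: contraNF nab => /andP[? ?]; apply/andP; split; lia.
Qed.

Lemma sermulE s t n k : sermul s t n k =
  \sum_(0 <= a < n.+1) \sum_(0 <= b < k.+1) s a b * t (n - a)%N (k - b)%N.
Proof. by rewrite /sermul big_mkord; apply: eq_bigr => a _; rewrite big_mkord. Qed.

Lemma sermul_sershift a b s t :
  sermul (sershift a b s) t = sershift a b (sermul s t).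
Proof.
apply: functional_extensionality => n; apply: functional_extensionality => k.
rewrite !sermulE /sershift.
transitivity (\sum_(0 <= c < n.+1) if (a <= c)%N then
    \sum_(0 <= d < k.+1)
      (if (b <= d)%N then s (c - a)%N (d - b)%N * t (n - c)%N (k - d)%N else 0)
  else 0).
  apply: eq_bigr => c _; case: (a <= c)%N; last by rewrite big1 // => d _; rewrite mul0r.
  by apply: eq_bigr => d _; case: (b <= d)%N; rewrite ?mul0r.
rewrite sum_nat_shift; case: (a <= n)%N => //=.
under eq_bigr => c _ do rewrite sum_nat_shift.
case: (b <= k)%N => /=; last by rewrite big1.
rewrite sermulE; apply: eq_bigr => c _; apply: eq_bigr => d _.
by rewrite !addnK !(addnC _ a) !(addnC _ b) !subnDA.
Qed.

Lemma sershiftC a b c d s :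
  sershift a b (sershift c d s) = sershift c d (sershift a b s).
Proof. by rewrite !sershift_sershift addnC [(b + d)%N]addnC. Qed.

Lemma sermulDl s1 s2 t :
  sermul (fun a b => s1 a b + s2 a b) t = fun n k => sermul s1 t n k + sermul s2 t n k.
Proof.
apply: functional_extensionality => n; apply: functional_extensionality => k.
rewrite /sermul -big_split; apply: eq_bigr => a _; rewrite -big_split.
by apply: eq_bigr => b _; rewrite mulrDl.
Qed.

Lemma sermulZl (c : R) s t :
  sermul (fun a b => c * s a b) t = fun n k => c * sermul s t n k.
Proof.
apply: functional_extensionality => n; apply: functional_extensionality => k.
rewrite /sermul mulr_sumr; apply: eq_bigr => a _; rewrite mulr_sumr.
by apply: eq_bigr => b _; rewrite mulrA.
Qed.

Lemma sermul1l t : sermul (serone R) t = t.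
Proof.
apply: functional_extensionality => n; apply: functional_extensionality => k.
rewrite sermulE big_nat_recl // big_nat_recl // /serone /= mul1r !subn0.
rewrite [X in _ + X + _]big1 ?addr0; last by move=> *; rewrite mul0r.
by rewrite big1 ?addr0 // => a _; rewrite big1 // => b _; rewrite mul0r.
Qed.

Lemma serxy0 s : serxy 0 s = s.
Proof.
apply: functional_extensionality => n; apply: functional_extensionality => k.
by rewrite /serxy !subn0.
Qed.

Lemma serxyS i s : serxy i.+1 s = sershift 1 1 (serxy i s).
Proof. by rewrite !serxyE sershift_sershift. Qed.

End SeriesShift.

Section FactorMultiplication.
Variables (R : comUnitRingType) (q : R).
Implicit Types (s t : ser R) (j n k : nat).

Definition mulfactor j s : ser R := fun n k =>
  q ^+ j * s n k + - (q ^+ j * qint q j.+1) * sershift 1 0 s n k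
  + qint q j * sershift 1 1 s n k.

Lemma sermul_factor j s : sermul (factor q j) s = mulfactor j s.
Proof.
apply: functional_extensionality => n; apply: functional_extensionality => k.
rewrite sermulE big_nat_recl // big_nat_recl // !subn0 /factor /=.
rewrite [X in _ + X + _]big1 ?addr0; last by move=> *; rewrite mul0r.
rewrite /mulfactor sershiftx sershiftxy -addrA; congr (_ + _).
case: n => [|n]; first by rewrite big_nil !mulr0 addr0.
rewrite big_nat_recl // [X in _ + X]big1 ?addr0; last first.
  by move=> a _; rewrite big1 // => b _; rewrite mul0r.
rewrite subSS subn0.
case: k => [|k]; first by rewrite big_nat1 /= mulr0 !addr0.
rewrite big_nat_recl // big_nat_recl // [X in _ + (_ + X)]big1 ?addr0; last first.
  by move=> b _; rewrite mul0r.
by rewrite /= !subn0 subSS subn0.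
Qed.

Lemma sermul_mulfactor j s t : sermul (mulfactor j s) t = mulfactor j (sermul s t).
Proof. by rewrite /mulfactor !sermulDl !sermulZl !sermul_sershift. Qed.

Lemma mulfactor_sershift j a b s :
  mulfactor j (sershift a b s) = sershift a b (mulfactor j s).
Proof.
apply: functional_extensionality => n; apply: functional_extensionality => k.
rewrite /mulfactor !(sershiftC 1) /sershift.
by case: ifP; rewrite ?mulr0 ?addr0.
Qed.

Lemma mulfactor_ext j s s' n k : (forall a b, (a <= n)%N -> s a b = s' a b) ->
  mulfactor j s n k = mulfactor j s' n k.
Proof.
move=> ss'; rewrite /mulfactor /sershift ss' //.
by case: n ss' => [|n] ss' //=; rewrite !subn1 /= !ss'.
Qed.

Lemma mulfactor_lincomb j N (c : nat -> R) (F : nat -> ser R) n k :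
  mulfactor j (fun a b => \sum_(i < N) c i * F i a b) n k =
  \sum_(i < N) c i * mulfactor j (F i) n k.
Proof.
rewrite /mulfactor /sershift; move: (q ^+ j) (- _) (qint q j) => A B C.
case: ifP => _; case: ifP => _; rewrite !(mulr0, addr0, mulr_sumr) -?big_split /=;
  by apply: eq_bigr => i _; ring.
Qed.

End FactorMultiplication.

Section CoefRecursion.
Variables (R : comUnitRingType) (q : R).
Local Notation qint := (qint q).

(* The coefficient of x^n y^k in f_m X_m = q^m + [m+1] x y X_(m+1). *)
Definition coef_rec (X : nat -> ser R) m n k : Prop :=
  q ^+ m * X m n k = (if (n == 0) && (k == 0) then q ^+ m else 0) +
   (if n is n'.+1 then q ^+ m * qint m.+1 * X m n' k +
      (if k is k'.+1 then qint m.+1 * X m.+1 n' k' - qint m * X m n' k' else 0)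
    else 0).

Lemma coef_rec_unique (hq : q \is a GRing.unit) W (X Y : nat -> ser R) :
  (forall m n k, (n - k <= W)%N -> coef_rec X m n k) ->
  (forall m n k, (n - k <= W)%N -> coef_rec Y m n k) ->
  forall n m k, (n - k <= W)%N -> X m n k = Y m n k.
Proof.
move=> recX recY; elim=> [|n IH] m k nkW; apply: (mulrI (unitrX m hq)).
  by rewrite recX // recY.
have nk'W : (n - k <= W)%N by rewrite (leq_trans _ nkW) // leq_sub2r.
rewrite recX // recY // IH //; case: k nkW nk'W => [|k] nkW nk'W //.
by rewrite !IH.
Qed.

End CoefRecursion.

Section InverseFactors.
Variables (R : comUnitRingType) (q : R) (g : nat -> ser R).
Hypothesis hg : forall j : nat, sermul (factor q j) (g j) = serone R.
Local Notation mulfactor := (mulfactor q).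
Local Notation qint := (qint q).
Implicit Types (s t : ser R) (j n k : nat).

Lemma mulfactor_g j : mulfactor j (g j) = serone R.
Proof. by rewrite -sermul_factor hg. Qed.

Fixpoint gprod (m i : nat) : ser R :=
  if i is i'.+1 then sermul (gprod m i') (g (m + i)) else g m.

Lemma gprod0 i : gprod 0 i = serprod g i.
Proof. by elim: i => //= i ->. Qed.

Lemma mulfactor_gprod m i :
  mulfactor m (gprod m i) = if i is i'.+1 then gprod m.+1 i' else serone R.
Proof.
elim: i => [|i IH] /=; first exact: mulfactor_g.
rewrite -sermul_mulfactor IH; case: i {IH} => [|i] /=; first by rewrite sermul1l addn1.
by rewrite addSnnS.
Qed.

Definition psicoef (m i : nat) : R := q ^+ (m + i) * \prod_(j < i) qint (m + j.+1).

Lemma psicoef0 m : psicoef m 0 = q ^+ m.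
Proof. by rewrite /psicoef big_ord0 addn0 mulr1. Qed.

Lemma psicoefS m i : psicoef m i.+1 = qint m.+1 * psicoef m.+1 i.
Proof.
rewrite /psicoef big_ord_recl addn1 addSnnS mulrCA; congr (_ * (_ * _)).
by apply: eq_bigr => j _; rewrite lift0 addSnnS.
Qed.

Lemma psicoef_0l i : psicoef 0 i = q ^+ i * qfact q i.
Proof. by rewrite /psicoef /qfact add0n big_add1 /= big_mkord. Qed.

(* Only the summands with i <= n reach the coefficient of x^n y^k. *)
Definition psi m : ser R := fun n k =>
  \sum_(i < n.+1) psicoef m i * serxy i (gprod m i) n k.

Lemma psi_widen N m n k : (n < N)%N ->
  \sum_(i < N) psicoef m i * serxy i (gprod m i) n k = psi m n k.
Proof.
move=> nN; rewrite /psi (big_ord_widen N (fun i => psicoef m i * serxy i (gprod m i) n k) nN).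
rewrite [RHS]big_mkcond; apply: eq_bigr => i _; case: ifP => // ni.
by rewrite /serxy -ltnS ni mulr0.
Qed.

Lemma mulfactor_psi m n k :
  mulfactor m (psi m) n k = q ^+ m * serone R n k + qint m.+1 * serxy 1 (psi m.+1) n k.
Proof.
rewrite (@mulfactor_ext _ q m (psi m)
  (fun a b => \sum_(i < n.+1) psicoef m i * serxy i (gprod m i) a b)); last first.
  by move=> a b an; rewrite psi_widen // ltnS.
rewrite (mulfactor_lincomb _ _ _ _ (fun i => serxy i (gprod m i))).
under eq_bigr => i _ do rewrite serxyE mulfactor_sershift -serxyE mulfactor_gprod.
rewrite big_ord_recl psicoef0 serxy0; congr (_ + _).
under eq_bigr => i _ do rewrite lift0 psicoefS serxyS sershiftxy.
rewrite serxyE sershiftxy; case: n => [|n]; first by rewrite big_ord0 mulr0.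
case: k => [|k]; first by rewrite big1 ?mulr0 // => i _; rewrite mulr0.
by rewrite /psi mulr_sumr; apply: eq_bigr => i _; rewrite mulrA.
Qed.

Lemma psi_rec m n k : coef_rec q psi m n k.
Proof.
have := mulfactor_psi m n k.
rewrite /mulfactor /coef_rec /serone serxyE sershiftx !sershiftxy -addrA.
move: (q ^+ m) => Q /(canRL (addrK _)) ->.
by case: n => [|n]; case: k => [|k] /=; ring.
Qed.

Lemma g0E n k : g 0 n k = (k == 0)%:R.
Proof.
have E n' : g 0 n' k - (if n' is n''.+1 then g 0 n'' k else 0) = serone R n' k.
  have := congr1 (fun s => s n' k) (mulfactor_g 0).
  rewrite /mulfactor sershiftx sershiftxy expr0 qint1 qint0 mul0r addr0 !mul1r mulN1r.
  by case: n' => [|n'] /=; rewrite ?subr0.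
elim: n => [|n IH]; first by rewrite -[LHS]subr0 E /serone /=; case: k {E}.
move: (E n.+1); rewrite IH /serone /= => /(canRL (subrK _)) ->.
by case: k {E IH} => [|k]; rewrite ?add0r ?addr0.
Qed.

Lemma rhs_psi n k : rhs q g n k = psi 0 n k - g 0 n k.
Proof.
rewrite /psi big_ord_recl psicoef0 expr0 mul1r serxy0 addrC addKr /rhs big_add1 big_mkord.
apply: eq_bigr => i _; rewrite lift0 /rhsterm /serxy /serscale psicoef_0l gprod0.
by case: ifP => _; rewrite ?mulr0.
Qed.

End InverseFactors.

(** * Le-diagrams, row by row *)

Section SubsetSums.
Variable T : finType.
Implicit Types (U r : {set T}).

Lemma sum_subsets_setD1 (V : nmodType) U u0 (F : {set T} -> V) : u0 \in U ->
  \sum_(r : {set T} | r \subset U) F r =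
  \sum_(r : {set T} | r \subset U :\ u0) (F r + F (u0 |: r)).
Proof.
move=> Uu0; rewrite (bigID (fun r => u0 \in r)) /= addrC big_split /=.
congr (_ + _); first by apply: eq_bigl => r; rewrite subsetD1.
pose h r := if u0 \in r then r :\ u0 else u0 |: r.
have hK : involutive h.
  move=> r; rewrite /h; case: (boolP (u0 \in r)) => ur.
    by rewrite setD11 setD1K.
  by rewrite setU11 setU1K.
rewrite (reindex_inj (inv_inj hK)); apply: eq_big => [r|r]; rewrite /h.
  case: ifP => ur; first by rewrite setD11 !andbF subsetD1 ur andbF.
  by rewrite setU11 subsetD1 subUset sub1set Uu0 ur !andbT.
by case: (boolP (u0 \in r)) => ur; rewrite ?setD11 ?andbF.
Qed.

Lemma sum_subsets_expr_card (R : comPzSemiRingType) U (x : R) :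
  \sum_(r : {set T} | r \subset U) x ^+ #|r| = (1 + x) ^+ #|U|.
Proof.
move Hn : #|U| => n; elim: n U Hn => [|n IH] U Hn.
  by rewrite (cards0_eq Hn) (big_pred1 set0) ?cards0 // => r; rewrite /= subset0.
have /set0Pn [u0 Uu0] : U != set0 by rewrite -cards_eq0 Hn.
have cardU : #|U :\ u0| = n by move: Hn; rewrite (cardsD1 u0) Uu0 add1n => -[].
rewrite (sum_subsets_setD1 _ Uu0) exprS -(IH _ cardU) mulr_sumr; apply: eq_bigr => r.
by rewrite subsetD1 => /andP[_ u0r]; rewrite cardsU1 u0r add1n exprS mulrDl mul1r.
Qed.

End SubsetSums.

Section TopRowFillings.
Variables (R : comUnitRingType) (q : R) (W : nat).
Implicit Types (U r : {set 'I_W}).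

Definition zero_after_one r (j : 'I_W) :=
  (j \notin r) && [exists j' : 'I_W, (j' < j)%N && (j' \in r)].

Definition unblocked U r := [set j in U | ~~ zero_after_one r j].

(* u0 is the leftmost column of U: without a 1 it stays unblocked, and with a 1 the
   unblocked columns are exactly those carrying a 1. *)
Lemma sum_row_fillings_setD1 (z : R) U u0 :
  u0 \in U -> (forall j, j \in U -> (u0 <= j)%N) ->
  \sum_(r : {set 'I_W} | r \subset U) q ^+ #|r| * z ^+ #|unblocked U r| =
  z * \sum_(r : {set 'I_W} | r \subset U :\ u0) q ^+ #|r| * z ^+ #|unblocked (U :\ u0) r|
  + q * z * (1 + q * z) ^+ #|U :\ u0|.
Proof.
move=> Uu0 u0_min; rewrite (sum_subsets_setD1 _ Uu0) big_split /= mulr_sumr.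
rewrite -sum_subsets_expr_card mulr_sumr; congr (_ + _); apply: eq_bigr => r.
  rewrite subsetD1 => /andP[rU u0r].
  have -> : unblocked U r = u0 |: unblocked (U :\ u0) r.
    apply/setP => j; rewrite !inE; case: (eqVneq j u0) => [->|] //=.
    rewrite Uu0 /zero_after_one u0r /=; apply/existsP => -[j' /andP[j'u0 j'r]].
    by have := u0_min j' (subsetP rU j' j'r); rewrite leqNgt j'u0.
  by rewrite cardsU1 !inE eqxx /= add1n exprS mulrCA.
rewrite subsetD1 => /andP[rU u0r].
have -> : unblocked U (u0 |: r) = u0 |: r.
  apply/setP => j; rewrite !inE; case: (eqVneq j u0) => [->|ju0] /=.
    by rewrite Uu0 /zero_after_one !inE eqxx.
  case: (boolP (j \in r)) => jr.
    by rewrite (subsetP rU j jr) /zero_after_one !inE jr orbT.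
  case: (boolP (j \in U)) => //= jU; apply/negbF.
  rewrite /zero_after_one !inE (negbTE ju0) jr /=.
  apply/existsP; exists u0; rewrite !inE eqxx andbT ltn_neqAle u0_min // andbT.
  by rewrite eq_sym.
by rewrite cardsU1 u0r add1n !exprS exprMn mulrACA.
Qed.

Lemma sum_row_fillings m U :
  q ^+ m * \sum_(r : {set 'I_W} | r \subset U) q ^+ #|r| * qint q m.+1 ^+ #|unblocked U r| =
  qint q m.+1 * qint q m.+2 ^+ #|U| - qint q m * qint q m.+1 ^+ #|U|.
Proof.
move Hn : #|U| => n; elim: n U Hn => [|n IH] U Hn.
  rewrite (cards0_eq Hn) (big_pred1 set0) => [|r]; last by rewrite /= subset0.
  have -> : unblocked set0 set0 = set0 by apply/setP => j; rewrite !inE.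
  by rewrite !cards0 !expr0 mul1r !mulr1 qintS addrC addKr.
have /set0Pn [u1 Uu1] : U != set0 by rewrite -cards_eq0 Hn.
case: (arg_minnP (fun j : 'I_W => val j) Uu1) => u0 Uu0 u0_min.
have {}Uu0 : u0 \in U by [].
have {}u0_min j : j \in U -> (u0 <= j)%N by exact: u0_min.
have cardU : #|U :\ u0| = n by move: Hn; rewrite (cardsD1 u0) Uu0 add1n => -[].
rewrite (sum_row_fillings_setD1 _ Uu0 u0_min) mulrDr mulrCA IH // cardU -qintSl.
rewrite !exprS; move: (qint q m.+2 ^+ n) => P; rewrite (qintS _ m.+1) exprS.
by ring.
Qed.

End TopRowFillings.

Lemma existsS n (P : pred 'I_n.+1) :
  [exists i, P i] = P ord0 || [exists i : 'I_n, P (lift ord0 i)].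
Proof.
apply/existsP/orP => [[i]|[P0|/existsP[i Pi]]]; last 2 first.
- by exists ord0.
- by exists (lift ord0 i).
by case: (unliftP ord0 i) => [a|] -> Pi; [right; apply/existsP; exists a | left].
Qed.

Section LeDiagrams.
Variables (k W : nat).
Implicit Types (p : LeType k W) (r : {set 'I_W}).

Definition LeRow p (i : 'I_k) : {set 'I_W} := [set j | p.2 (i, j)].

Lemma isLeP p : reflect
  [/\ forall i i' : 'I_k, (i <= i')%N -> (p.1 i' <= p.1 i)%N,
      forall i (j : 'I_W), p.2 (i, j) -> (j < p.1 i)%N &
      forall i (j : 'I_W) (i' : 'I_k), (j < p.1 i)%N -> zero_after_one (LeRow p i) j ->
        (i' < i)%N -> ~~ p.2 (i', j)]
  (isLe p).
Proof.
apply: (iffP and3P) => [[/forallP mono /forallP inside /forallP le]|[mono inside le]].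
  split=> [i i' ii'|i j|i j i' ji /andP[nij /existsP[j' /andP[j'j ij']]] i'i].
  - by have /forallP/(_ i')/implyP := mono i; apply.
  - by have /implyP := inside (i, j); apply.
  rewrite inE in nij; rewrite inE in ij'; apply/negP => i'j.
  have /implyP := le (i, j); rewrite /= ji nij => /(_ isT)/negP; apply.
  apply/andP; split; apply/existsP; first by exists i'; rewrite i'i.
  by exists j'; rewrite j'j.
split; apply/forallP.
- by move=> i; apply/forallP => i'; apply/implyP; apply: mono.
- by move=> [i j]; apply/implyP; apply: inside.
move=> [i j]; apply/implyP => /andP[/= ji nij].
apply/negP => /andP[/existsP[i' /andP[i'i i'j]] /existsP[j' /andP[j'j ij']]].
suff zij : zero_after_one (LeRow p i) j by have := le i j i' ji zij i'i; rewrite i'j.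
by rewrite /zero_after_one inE nij; apply/existsP; exists j'; rewrite j'j inE.
Qed.

Lemma LeRank_sum p : LeRank p = (\sum_(i < k) #|LeRow p i|)%N.
Proof.
rewrite /LeRank -sum1_card (eq_bigl (fun c => true && p.2 (c.1, c.2))); last by case.
rewrite -(pair_big_dep xpredT (fun i j => p.2 (i, j)) (fun _ _ => 1%N)).
by apply: eq_bigr => i _; rewrite -sum1_card; apply: eq_bigl => j; rewrite inE.
Qed.

(* By the Le-condition, every box above a 0 having a 1 to its left is 0; hence a new top
   row may only put 1s into free columns. *)
Definition restricted_cols p : {set 'I_W} :=
  [set j : 'I_W | [exists i, (j < p.1 i)%N && zero_after_one (LeRow p i) j]].

Definition free_cols p (N : nat) : {set 'I_W} :=
  [set j : 'I_W | (j < N)%N && (j \notin restricted_cols p)].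

Definition rows_le p (N : nat) := [forall i, (p.1 i <= N)%N].

Lemma card_free_colsS p N (NW : (N < W)%N) :
  rows_le p N -> #|free_cols p N.+1| = (#|free_cols p N|).+1.
Proof.
move=> rowsN; have -> : free_cols p N.+1 = Ordinal NW |: free_cols p N.
  apply/setP => j; rewrite !inE ltnS leq_eqVlt -val_eqE /=.
  case: (eqVneq (j : nat) N) => [jN|] //=; apply/negP => /existsP[i /andP[ji _]].
  by have := leq_trans ji (forallP rowsN i); rewrite jN ltnn.
by rewrite cardsU1 !inE ltnn.
Qed.

Definition add_top_row (l0 : 'I_W.+1) r p : LeType k.+1 W :=
  ([ffun i => if unlift ord0 i is Some i' then p.1 i' else l0],
   [ffun c : 'I_k.+1 * 'I_W =>
      if unlift ord0 c.1 is Some i' then p.2 (i', c.2) else c.2 \in r]).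

Definition split_top_row (p : LeType k.+1 W) : ('I_W.+1 * {set 'I_W}) * LeType k W :=
  ((p.1 ord0, [set j | p.2 (ord0, j)]),
   ([ffun i => p.1 (lift ord0 i)], [ffun c : 'I_k * 'I_W => p.2 (lift ord0 c.1, c.2)])).

Lemma add_top_rowK :
  cancel (fun x => add_top_row x.1.1 x.1.2 x.2) split_top_row.
Proof.
move=> [[l0 r] [lam D]]; rewrite /split_top_row /=; congr (_, _, (_, _)).
- by rewrite ffunE unlift_none.
- by apply/setP => j; rewrite inE ffunE /= unlift_none.
- by apply/ffunP => i; rewrite !ffunE liftK.
- by apply/ffunP => -[i j]; rewrite !ffunE /= liftK.
Qed.

Lemma split_top_rowK :
  cancel split_top_row (fun x => add_top_row x.1.1 x.1.2 x.2).
Proof.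
move=> [lam D]; rewrite /split_top_row /add_top_row /=; congr (_, _).
  by apply/ffunP => i; rewrite !ffunE; case: (unliftP ord0 i) => [i'|] ->; rewrite ?ffunE.
apply/ffunP => -[i j]; rewrite !ffunE /=.
by case: (unliftP ord0 i) => [i'|] ->; rewrite ?ffunE ?inE.
Qed.

Lemma sum_LeTypeS (V : nmodType) (F : LeType k.+1 W -> V) :
  \sum_(p : LeType k.+1 W) F p =
  \sum_(l0 : 'I_W.+1) \sum_(r : {set 'I_W}) \sum_(p : LeType k W) F (add_top_row l0 r p).
Proof.
rewrite (reindex (fun x => add_top_row x.1.1 x.1.2 x.2)) /=; last first.
  by apply: onW_bij; exists split_top_row; [exact: add_top_rowK | exact: split_top_rowK].
rewrite -(pair_bigA _ (fun x p => F (add_top_row x.1 x.2 p))) /=.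
by rewrite -(pair_bigA _ (fun l0 r => \sum_(p : LeType k W) F (add_top_row l0 r p))).
Qed.

End LeDiagrams.

Lemma rows_le_top k W (p : LeType k.+1 W) N : isLe p -> rows_le p N = (p.1 ord0 <= N)%N.
Proof.
move=> /isLeP[mono _ _]; apply/forallP/idP => [|top_le i]; first exact.
exact: leq_trans (mono ord0 i (leq0n _)) top_le.
Qed.

Section AddTopRow.
Variables (k W : nat) (l0 : 'I_W.+1) (r : {set 'I_W}) (p : LeType k W).
Local Notation p' := (add_top_row l0 r p).

Lemma add_top_row_len0 : p'.1 ord0 = l0.
Proof. by rewrite ffunE unlift_none. Qed.

Lemma add_top_row_lenS i : p'.1 (lift ord0 i) = p.1 i.
Proof. by rewrite ffunE liftK. Qed.

Lemma add_top_row_fill0 j : p'.2 (ord0, j) = (j \in r).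
Proof. by rewrite ffunE /= unlift_none. Qed.

Lemma add_top_row_fillS i j : p'.2 (lift ord0 i, j) = p.2 (i, j).
Proof. by rewrite ffunE /= liftK. Qed.

Lemma LeRow_add_top_row0 : LeRow p' ord0 = r.
Proof. by apply/setP => j; rewrite inE add_top_row_fill0. Qed.

Lemma LeRow_add_top_rowS i : LeRow p' (lift ord0 i) = LeRow p i.
Proof. by apply/setP => j; rewrite !inE add_top_row_fillS. Qed.

Lemma isLe_add_top_row :
  isLe p' = [&& isLe p, rows_le p l0 & r \subset free_cols p l0].
Proof.
apply/isLeP/and3P => [[mono inside le]|].
  split.
  - apply/isLeP; split=> [i i' ii'|i j ij|i j i' ji zij i'i].
    + by have := mono (lift ord0 i) (lift ord0 i'); rewrite !add_top_row_lenS !lift0; apply.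
    + by have := inside (lift ord0 i) j; rewrite add_top_row_fillS add_top_row_lenS; apply.
    have := le (lift ord0 i) j (lift ord0 i').
    by rewrite add_top_row_lenS LeRow_add_top_rowS add_top_row_fillS !lift0; apply.
  - apply/forallP => i; have := mono ord0 (lift ord0 i).
    by rewrite add_top_row_lenS add_top_row_len0; apply.
  apply/subsetP => j jr; rewrite !inE; apply/andP; split.
    by have := inside ord0 j; rewrite add_top_row_fill0 add_top_row_len0; apply.
  apply/existsP => -[i /andP[ji zij]]; have := le (lift ord0 i) j ord0.
  rewrite add_top_row_lenS LeRow_add_top_rowS add_top_row_fill0 lift0 jr.
  by move=> /(_ ji zij isT).
move=> [/isLeP[mono inside le] /forallP rows /subsetP rfree].
split=> [i i'|i j|i j i'];
  case: (unliftP ord0 i) => [a|] ->; rewrite ?add_top_row_lenS ?add_top_row_len0.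
- case: (unliftP ord0 i') => [b|] ->; rewrite ?add_top_row_lenS ?add_top_row_len0 ?lift0 //.
  by rewrite ltnS; apply: mono.
- by case: (unliftP ord0 i') => [b|] ->; rewrite ?add_top_row_lenS ?add_top_row_len0.
- by rewrite add_top_row_fillS; apply: inside.
- by rewrite add_top_row_fill0 => /rfree; rewrite inE => /andP[].
- rewrite LeRow_add_top_rowS => ja zaj; case: (unliftP ord0 i') => [b|] ->.
    by rewrite !lift0 ltnS add_top_row_fillS; apply: le.
  rewrite add_top_row_fill0 => _; apply: contraTN ja => /rfree.
  by rewrite !inE => /andP[_ /existsPn/(_ a)]; rewrite zaj andbT.
by move=> _ _; rewrite ltn0.
Qed.

Lemma LeRank_add_top_row : LeRank p' = (#|r| + LeRank p)%N.
Proof.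
rewrite !LeRank_sum big_ord_recl LeRow_add_top_row0.
by under eq_bigr do rewrite LeRow_add_top_rowS.
Qed.

Lemma free_cols_add_top_row : free_cols p' l0 = unblocked (free_cols p l0) r.
Proof.
apply/setP => j; rewrite !inE existsS add_top_row_len0 LeRow_add_top_row0 negb_or.
case: (j < l0)%N; rewrite //= andbC; congr (~~ _ && _); apply: eq_existsb => i.
by rewrite add_top_row_lenS LeRow_add_top_rowS.
Qed.

End AddTopRow.

Section WeightedCounts.
Variables (R : comUnitRingType) (q : R) (W : nat).
Local Notation qint := (qint q).

Definition leSum k N m : R :=
  \sum_(p : LeType k W | isLe p && rows_le p N) q ^+ LeRank p * qint m.+1 ^+ #|free_cols p N|.

Definition leSum_top k (l0 : 'I_W.+1) m : R :=
  \sum_(p : LeType k.+1 W | isLe p && (p.1 ord0 == l0))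
    q ^+ LeRank p * qint m.+1 ^+ #|free_cols p l0|.

Lemma leSum_top_row k m (l0 : 'I_W.+1) :
  q ^+ m * leSum_top k l0 m = qint m.+1 * leSum k l0 m.+1 - qint m * leSum k l0 m.
Proof.
rewrite /leSum_top big_mkcond sum_LeTypeS (bigD1 l0) // [X in _ * (_ + X)]big1 ?addr0; last first.
  move=> l1 l1l0; apply: big1 => r _; apply: big1 => p _.
  by rewrite add_top_row_len0 (negbTE l1l0) andbF.
rewrite exchange_big /leSum !mulr_sumr -sumrB [RHS]big_mkcond; apply: eq_bigr => p _.
under eq_bigr => r _ do rewrite isLe_add_top_row LeRank_add_top_row
  free_cols_add_top_row add_top_row_len0 eqxx andbT andbA.
case: (isLe p && rows_le p l0) => /=; last by rewrite big1 ?mulr0.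
rewrite -big_mkcond /=; under eq_bigr => r _ do rewrite exprD -mulrA mulrCA.
by rewrite -mulr_sumr mulrCA sum_row_fillings; ring.
Qed.

Lemma leSum_split k N m (NW : (N < W.+1)%N) :
  leSum k.+1 N m =
  (if N is N'.+1 then qint m.+1 * leSum k.+1 N' m else 0) + leSum_top k (Ordinal NW) m.
Proof.
rewrite /leSum /leSum_top; case: N NW => [|N] NW.
  rewrite add0r; apply: eq_bigl => p; case: (boolP (isLe p)) => //= Lp.
  by rewrite rows_le_top // leqn0 -val_eqE.
rewrite mulr_sumr [LHS]big_mkcond [X in X + _]big_mkcond [X in _ + X]big_mkcond -big_split.
apply: eq_bigr => p _ /=.
case: (boolP (isLe p)) => /= Lp; last by rewrite addr0.
rewrite !rows_le_top // -val_eqE /= leq_eqVlt ltnS.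
case: (eqVneq (p.1 ord0 : nat) N.+1) => [->|_] /=; first by rewrite ltnn add0r.
rewrite addr0; case: ifP => top_le //.
by rewrite card_free_colsS ?rows_le_top // exprS mulrCA.
Qed.

Lemma leSum_rec k N m : (N <= W)%N ->
  q ^+ m * leSum k.+1 N m =
  q ^+ m * (if N is N'.+1 then qint m.+1 * leSum k.+1 N' m else 0) +
  (qint m.+1 * leSum k N m.+1 - qint m * leSum k N m).
Proof. by move=> NW; rewrite (leSum_split _ _ NW) mulrDr leSum_top_row. Qed.

Lemma leSum0 N m : (N <= W)%N -> leSum 0 N m = qint m.+1 ^+ N.
Proof.
move=> NW; pose p0 : LeType 0 W := ([ffun=> ord0], [ffun=> false]).
have Le0 (p : LeType 0 W) : isLe p && rows_le p N.
  by apply/andP; split; [apply/isLeP; split=> -[] | apply/forallP => -[]].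
rewrite /leSum (big_pred1 p0) => [|p]; last first.
  rewrite /= Le0; apply/esym/eqP; case: p => lam D.
  by congr (_, _); apply/ffunP => -[[]].
rewrite LeRank_sum big_ord0 expr0 mul1r; congr (_ ^+ _).
elim: N NW {Le0} => [|N IH] NW.
  by apply/eqP; rewrite cards_eq0; apply/eqP/setP => j; rewrite !inE.
by rewrite card_free_colsS ?IH ?(ltnW NW) //; apply/forallP => -[].
Qed.

Lemma leSum_full k : leSum k W 0 = \sum_(p : LeType k W | isLe p) q ^+ LeRank p.
Proof.
apply: eq_big => [p|p _]; last by rewrite qint1 expr1n mulr1.
suff -> : rows_le p W by rewrite andbT.
by apply/forallP => i; rewrite -ltnS.
Qed.

(* Diagrams live in a k x W rectangle, so the recursion only holds where n - k <= W,
   which is all that coef_rec_unique looks at. *)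
Definition leCoef m n k : R := if (k <= n)%N then leSum k (n - k) m else 0.

Lemma leCoef_rec m n k : (n - k <= W)%N -> coef_rec q leCoef m n k.
Proof.
rewrite /coef_rec /leCoef; case: k => [|k] nkW.
  rewrite subn0 in nkW; case: n nkW => [|n] nkW /=.
    by rewrite leSum0 // expr0 mulr1 addr0.
  by rewrite !subn0 leSum0 // leSum0 ?(ltnW nkW) // exprS mulrA add0r addr0.
case: n nkW => [|n] nkW /=; first by rewrite mulr0 addr0.
rewrite ltnS subSS add0r; case: (leqP k n) => kn; last first.
  by rewrite ltnNge (ltnW kn) /= !mulr0 subr0 addr0.
rewrite leSum_rec; last by move: nkW; rewrite subSS.
congr (_ + _); case: (ltngtP k n) kn => // [kn|->] _; last by rewrite subnn !mulr0.
by rewrite -subnSK // mulrA.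
Qed.

End WeightedCounts.

Theorem mainTheorem5 (R : comUnitRingType) (q : R) (hq : q \is a GRing.unit)
  (g : nat -> ser R)
  (hg : forall j : nat, sermul (factor q j) (g j) = serone R) :
  Aser q = rhs q g.
Proof.
apply: functional_extensionality => n; apply: functional_extensionality => k.
have psi_leCoef : psi q g 0 n k = leCoef q (n - k) 0 n k.
  apply: (@coef_rec_unique _ _ hq (n - k)) => // m n' k' nkW; first exact: psi_rec.
  exact: leCoef_rec nkW.
rewrite rhs_psi psi_leCoef (g0E hg) /Aser /leCoef /Akn.
case: k {psi_leCoef} => [|k] /=; first by rewrite subn0 leSum0 // qint1 expr1n subrr.
by case: leqP => kn; rewrite subr0 // leSum_full.
Qed.
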